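(* For every Borel function $f:\mathbb{R}\to\mathbb{R}$ there is a nonempty perfect set $P\subseteq\mathbb{R}$ such that $f^{-1}[P]$ is both meager and Lebesgue null. *)

From HB Require Import structures.
From mathcomp Require Import all_boot all_order all_algebra.
From mathcomp Require Import all_classical all_reals all_analysis.
Set Implicit Arguments. Unset Strict Implicit. Unset Printing Implicit Defensive.
Import Order.TTheory GRing.Theory Num.Theory.
Local Open Scope classical_set_scope.

Definition nowhere_dense {T : topologicalType} (A : set T) : Prop :=
  interior (closure A) = set0.

Definition meager {T : topologicalType} (A : set T) : Prop :=
  exists F : (set T)^nat,
    (forall n, nowhere_dense (F n)) /\ A `<=` \bigcup_n F n.

From HB Require Import structures.
From mathcomp Require Import all_boot all_order all_algebra.
From mathcomp Require Import all_classical all_reals all_analysis.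
From mathcomp Require Import ring lra.
Import Order.TTheory GRing.Theory Num.Theory.
Import numFieldNormedType.Exports.
Local Open Scope classical_set_scope.
Local Open Scope ring_scope.
Set Implicit Arguments. Unset Strict Implicit. Unset Printing Implicit Defensive.

(* Fixing the even-indexed ternary digits of the Cantor set yields a family
   [cantor_copy t], indexed by the uncountable Cantor space, of pairwise disjoint
   nonempty perfect sets.  Their preimages under [f] are pairwise disjoint Borel
   sets.  A Borel set has the Baire property, so if it is not meager it is
   comeager in some rational interval; two disjoint such sets cannot share that
   interval by the Baire category theorem, hence only countably many preimages
   are not meager.  Likewise, for the sigma-finite Lebesgue measure only countably
   many disjoint measurable sets have positive measure.  Any index outside these
   two countable sets gives the required perfect set. *)

Section cantor_val.
Variable R : realType.
Implicit Types b : nat -> bool.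

(* [cantor_val b] is the point of the middle-thirds Cantor set with ternary
   digits [2 * b n]. *)
Definition cantor_digit b n : R := if b n then 2 / 3 ^+ n.+1 else 0.
Definition cantor_psum b N : R := \sum_(n < N) cantor_digit b n.
Definition cantor_val b : R := sup (range (cantor_psum b)).

Lemma expr3_gt0 n : 0 < (3 : R) ^+ n.
Proof. exact: exprn_gt0. Qed.

Lemma cantor_digit_ge0 b n : 0 <= cantor_digit b n.
Proof. by rewrite /cantor_digit; case: ifP => // _; rewrite divr_ge0 ?ltW ?expr3_gt0. Qed.

Lemma cantor_digit_le b n : cantor_digit b n <= (3 ^+ n)^-1 - (3 ^+ n.+1)^-1.
Proof.
have e : (3 ^+ n)^-1 - (3 ^+ n.+1)^-1 = 2 / 3 ^+ n.+1 :> R.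
  by rewrite exprS; field; rewrite gt_eqF ?expr3_gt0.
by rewrite e /cantor_digit; case: ifP => // _; rewrite divr_ge0 ?ltW ?expr3_gt0.
Qed.

Lemma cantor_psumS b N : cantor_psum b N.+1 = cantor_psum b N + cantor_digit b N.
Proof. by rewrite /cantor_psum big_ord_recr. Qed.

Lemma cantor_psum_eq b b' N : (forall n, (n < N)%N -> b n = b' n) ->
  cantor_psum b N = cantor_psum b' N.
Proof. by move=> bb'; apply: eq_bigr => i _; rewrite /cantor_digit bb'. Qed.

Lemma cantor_psumD b N k :
  cantor_psum b N <= cantor_psum b (N + k) <= cantor_psum b N + (3 ^+ N)^-1.
Proof.
suff : cantor_psum b N <= cantor_psum b (N + k) <=
    cantor_psum b N + ((3 ^+ N)^-1 - (3 ^+ (N + k))^-1).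
  by have := expr3_gt0 (N + k); rewrite -invr_gt0; lra.
elim: k => [|k]; first by rewrite addn0 subrr addr0 lexx.
rewrite addnS cantor_psumS.
by have := cantor_digit_ge0 b (N + k); have := cantor_digit_le b (N + k); lra.
Qed.

Lemma cantor_psum_le b N M : cantor_psum b M <= cantor_psum b N + (3 ^+ N)^-1.
Proof.
have [/subnKC <-|/ltnW MN] := leqP N M; first by case/andP: (cantor_psumD b N (M - N)).
have /andP[+ _] := cantor_psumD b M (N - M); rewrite subnKC //.
by have := expr3_gt0 N; rewrite -invr_gt0; lra.
Qed.

Lemma cantor_val_ge b N : cantor_psum b N <= cantor_val b.
Proof.
apply: sup_upper_bound; last by exists N.
split; first by exists (cantor_psum b 0), 0%N.
by exists (cantor_psum b 0 + (3 ^+ 0)^-1) => _ [M _ <-]; apply: cantor_psum_le.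
Qed.

Lemma cantor_val_le b N : cantor_val b <= cantor_psum b N + (3 ^+ N)^-1.
Proof.
apply: ge_sup; first by exists (cantor_psum b 0), 0%N.
by move=> _ [M _ <-]; apply: cantor_psum_le.
Qed.

Lemma cantor_val_dist b b' N : (forall n, (n < N)%N -> b n = b' n) ->
  `|cantor_val b - cantor_val b'| <= (3 ^+ N)^-1.
Proof.
move=> /cantor_psum_eq e.
have := cantor_val_ge b N; have := cantor_val_le b N.
have := cantor_val_ge b' N; have := cantor_val_le b' N.
by rewrite ler_norml e; lra.
Qed.

(* The digit [2 / 3 ^ (N + 1)] exceeds the whole tail [3 ^ -(N + 1)] after it. *)
Lemma cantor_val_lt b b' N : (forall n, (n < N)%N -> b n = b' n) -> ~~ b N -> b' N ->
  cantor_val b < cantor_val b'.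
Proof.
move=> /cantor_psum_eq e /negbTE bN b'N.
have := cantor_val_le b N.+1; have := cantor_val_ge b' N.+1.
rewrite !cantor_psumS /cantor_digit bN b'N e.
by have := expr3_gt0 N.+1; rewrite -invr_gt0; lra.
Qed.

Lemma cantor_val_inj : injective cantor_val.
Proof.
move=> b b' e; apply/funext => n; apply/eqP/negPn/negP => bn.
have [N /eqP bN minN] := ex_minnP (ex_intro (fun n => b n != b' n) n bn).
have agree : (forall n, (n < N)%N -> b n = b' n).
  by move=> m mN; apply/eqP/negPn/negP => /minN; rewrite leqNgt mN.
have [bNt|bNf] := boolP (b N).
- have b'Nf : ~~ b' N by move: bN; rewrite bNt; case: (b' N).
  by have := cantor_val_lt (fun m h => esym (agree m h)) b'Nf bNt; rewrite e ltxx.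
- have b'Nt : b' N by move: bN; rewrite (negbTE bNf); case: (b' N).
  by have := cantor_val_lt agree bNf b'Nt; rewrite e ltxx.
Qed.

Lemma expr3_inv_lt (e : R) : 0 < e -> exists N, (3 ^+ N)^-1 < e.
Proof.
move=> e0; set N := Num.bound e^-1; exists N.
have eN : e^-1 < N%:R by apply: archi_boundP; rewrite invr_ge0 ltW.
have N3 : N%:R <= 3 ^+ N :> R by rewrite -natrX ler_nat ltnW // ltn_expl.
by rewrite -(invrK e) ltf_pV2 ?posrE ?expr3_gt0 ?invr_gt0 // (lt_le_trans eN).
Qed.

End cantor_val.

Definition interleave (t s : nat -> bool) (n : nat) : bool :=
  if odd n then s n./2 else t n./2.

Lemma interleave_injl t t' s s' : interleave t s = interleave t' s' -> t = t'.
Proof.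
move=> e; apply/funext => n; have := congr1 (fun g => g n.*2) e.
by rewrite /interleave odd_double doubleK.
Qed.

Lemma interleave_injr t : injective (interleave t).
Proof.
move=> s s' e; apply/funext => n; have := congr1 (fun g => g n.*2.+1) e.
by rewrite /interleave /= odd_double /= uphalf_double.
Qed.

Lemma cantor_nbhs_prefix (s : cantor_space) N :
  nbhs s [set s' : cantor_space | forall n, (n < N)%N -> s' n = s n].
Proof.
elim: N => [|N IH]; first by apply: filterS filterT => s' _ n.
have sN : nbhs s [set s' : cantor_space | s' N = s N].
  by apply: (@proj_continuous nat (fun _ => bool) N s [set s N]).
apply: filterS (filterI IH sN) => s' [s's s'N] n.
by rewrite ltnS leq_eqVlt => /predU1P[->|/s's].
Qed.

Lemma perfect_set_range (S T : topologicalType) (g : S -> T) :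
  perfect_set [set: S] -> continuous g -> injective g -> closed (range g) ->
  perfect_set (range g).
Proof.
move=> /perfectTP_ex perfS gC gI cg; apply/perfectP; split => //.
apply/seteqP; split => // _ [/set_mem [s _ <-] [V Vgs Vg]].
have [Q [oQ Qs QV]] : exists Q, [/\ open Q, Q s & Q `<=` g @^-1` V].
  by have := gC s V Vgs; rewrite nbhsE => -[Q [oQ Qs] QV]; exists Q.
have Qeq w : Q w -> w = s.
  move=> Qw; apply: gI; suff : (V `&` range g) (g w) by rewrite Vg.
  by split; [exact: QV | exists w].
have [y [z [Qy Qz /eqP []]]] := perfS Q oQ (ex_intro _ s Qs).
by rewrite (Qeq _ Qy) (Qeq _ Qz).
Qed.

Section cantor_family.
Variable R : realType.

Definition cantor_copy_map (t : nat -> bool) (s : cantor_space) : R :=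
  cantor_val R (interleave t s).

(* The even-indexed digits [t] label the copy, the odd-indexed ones move inside it. *)
Definition cantor_copy (t : nat -> bool) : set R := range (cantor_copy_map t).

Lemma cantor_copy_map_continuous t : continuous (cantor_copy_map t).
Proof.
move=> s; apply/cvgrPdist_lt => e e0.
have [N Ne] := expr3_inv_lt e0.
apply: filterS (cantor_nbhs_prefix s N) => s' s's.
apply: le_lt_trans Ne; apply: cantor_val_dist => n nN.
rewrite /interleave; case: odd => //; apply: esym; apply: s's.
by rewrite ltn_half_double -addnn (leq_trans nN) ?leq_addr.
Qed.

Lemma cantor_copy_closed t : closed (cantor_copy t).
Proof.
apply: compact_closed; first exact: norm_hausdorff.
apply: continuous_compact; last exact: cantor_space_compact.
exact/continuous_subspaceT/cantor_copy_map_continuous.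
Qed.

Lemma cantor_copy_perfect t : perfect_set (cantor_copy t).
Proof.
apply: (perfect_set_range cantor_perfect (@cantor_copy_map_continuous t)).
  by move=> s s' /cantor_val_inj /interleave_injr.
exact: cantor_copy_closed.
Qed.

Lemma cantor_copy_neq0 t : cantor_copy t !=set0.
Proof. by exists (cantor_copy_map t (fun=> false)), (fun=> false). Qed.

Lemma cantor_copy_disjoint t t' x : cantor_copy t x -> cantor_copy t' x -> t = t'.
Proof. by move=> [s _ <-] [s' _] /cantor_val_inj /esym /interleave_injl. Qed.

End cantor_family.

Section meager.
Variable T : topologicalType.
Implicit Types A B U : set T.

Lemma nowhere_dense0 : nowhere_dense (@set0 T).
Proof. by rewrite /nowhere_dense closure0 interior0. Qed.

Lemma nowhere_dense_meager A : nowhere_dense A -> meager A.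
Proof.
move=> ndA; exists (fun n => if n is 0 then A else set0); split => [[|n]|x Ax] //.
- exact: nowhere_dense0.
- by exists 0%N.
Qed.

Lemma meager0 : meager (@set0 T).
Proof. exact/nowhere_dense_meager/nowhere_dense0. Qed.

Lemma meagerS A B : A `<=` B -> meager B -> meager A.
Proof. by move=> AB [F [ndF BF]]; exists F; split => //; apply: subset_trans BF. Qed.

Lemma meager_bigcup (F : (set T)^nat) : (forall n, meager (F n)) ->
  meager (\bigcup_n F n).
Proof.
move=> /choice[G /all_and2[ndG FG]].
exists (fun k => if unpickle k is Some (n, m) then G n m else set0); split.
  by move=> k; case: (unpickle k) => [[n m]|]; [exact: ndG | exact: nowhere_dense0].
by move=> x [n _ /FG[m _ Gx]]; exists (pickle (n, m)) => //; rewrite pickleK.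
Qed.

Lemma meagerU A B : meager A -> meager B -> meager (A `|` B).
Proof.
move=> mA mB; apply: (@meagerS _ (\bigcup_n if n is 0 then A else B)).
  by move=> x [Ax|Bx]; [exists 0%N | exists 1%N].
by apply: meager_bigcup => -[|n].
Qed.

Lemma nowhere_dense_closureD U : open U -> nowhere_dense (closure U `\` U).
Proof.
move=> oU; have cD : closed (closure U `\` U).
  by apply: closedI; [exact: closed_closure | exact: open_closedC].
rewrite /nowhere_dense -(closure_id _).1 //; apply/seteqP; split => // x Dx.
have [clUx _] := interior_subset Dx.
by have [y [Uy [_ nUy]]] := clUx _ Dx.
Qed.

Definition baire_property A :=
  exists U, open U /\ meager ((A `\` U) `|` (U `\` A)).

Lemma baire_property_open U : open U -> baire_property U.
Proof. by move=> oU; exists U; rewrite !setDv setU0; split => //; exact: meager0. Qed.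

Lemma baire_propertyC A : baire_property A -> baire_property (~` A).
Proof.
move=> [U [oU mAU]]; exists (~` closure U); split; first exact/closed_openC/closed_closure.
apply: (@meagerS _ (((A `\` U) `|` (U `\` A)) `|` (closure U `\` U))).
  move=> x [[nAx nUx]|[nUx nnAx]].
    have Ux : closure U x by apply: contra_notP nUx.
    by have [|] := pselect (U x); [left; right | right].
  have Ax : A x by apply: contra_notP nnAx.
  by left; left; split => // Ux; apply: nUx; exact: subset_closure.
by apply: meagerU => //; exact/nowhere_dense_meager/nowhere_dense_closureD.
Qed.

Lemma baire_property_bigcup (F : (set T)^nat) :
  (forall n, baire_property (F n)) -> baire_property (\bigcup_n F n).
Proof.
move=> /choice[U /all_and2[oU mFU]]; exists (\bigcup_n U n); split.
  by apply: bigcup_open => n _; exact: oU.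
apply: (@meagerS _ (\bigcup_n ((F n `\` U n) `|` (U n `\` F n))));
  last exact: meager_bigcup.
move=> x [[[n _ Fx] nUx]|[[n _ Ux] nFx]]; exists n => //.
- by left; split => // Ux; apply: nUx; exists n.
- by right; split => // Fx; apply: nFx; exists n.
Qed.

End meager.

Lemma open_nonempty_not_meager (K : realType) (V : completeNormedModType K)
    (W : set V) : open W -> W !=set0 -> ~ meager W.
Proof.
move=> oW W0 [F [ndF WF]].
have dF i : open (~` closure (F i)) /\ dense (~` closure (F i)).
  split; first exact/closed_openC/closed_closure.
  move=> Q [z Qz] oQ; apply/set0P/negP => /eqP QF.
  suff : (closure (F i))° z by rewrite (ndF i).
  apply: filterS (open_nbhs_nbhs (conj oQ Qz)) => y Qy.
  by apply: contrapT => nFy; have : (Q `&` ~` closure (F i)) y by []; rewrite QF.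
have [x [Wx Fx]] := Baire dF W0 oW.
have [n _ Fnx] := WF x Wx.
exact: (Fx n I) (subset_closure Fnx).
Qed.

Section real_line.
Variable R : realType.

Lemma nowhere_dense_set1 (a : R) : nowhere_dense [set a].
Proof. by rewrite /nowhere_dense -(closure_id _).1 ?interior_set1 //; exact: closed_eq. Qed.

Lemma baire_property_itvoc (a b : R) : baire_property `]a, b]%classic.
Proof.
exists `]a, b[%classic; split; first exact: itv_open.
apply: (@meagerS _ _ [set b]); last exact/nowhere_dense_meager/nowhere_dense_set1.
move=> x [[/= + nabx]|[/= + naby]]; rewrite !in_itv /= => /andP[ax xb].
- apply/eqP/negPn/negP => xnb; apply: nabx.
  by rewrite in_itv /= ax lt_neqAle xnb xb.
- by exfalso; apply: naby; rewrite in_itv /= ax ltW.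
Qed.

Lemma measurable_baire_property (A : set R) : measurable A -> baire_property A.
Proof.
have BPsigma : sigma_algebra setT (@baire_property R).
  split; first exact/baire_property_open/open0.
  - by move=> B BB; rewrite setTD; exact: baire_propertyC.
  - exact: baire_property_bigcup.
apply: (smallest_sub BPsigma) => _ [x _ <-]; exact: baire_property_itvoc.
Qed.

(* The open witness is nonempty since [A] is not meager, so it contains a
   rational interval. *)
Lemma baire_property_not_meager (A : set R) : baire_property A -> ~ meager A ->
  exists p q : rat, ratr p < ratr q :> R /\ meager (`]ratr p, ratr q[%classic `\` A).
Proof.
move=> [U [oU mAU]] nmA.
have [x Ux] : U !=set0.
  apply/set0P/negP => /eqP U0; apply: nmA; apply: meagerS mAU => y Ay.
  by left; split => //; rewrite U0.
have /nbhs_ballP[e /= e0] := oU x Ux; rewrite ball_itv => eU.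
have [p] := @rat_in_itvoo R (x - e) x ltac:(lra).
have [q] := @rat_in_itvoo R x (x + e) ltac:(lra).
rewrite !in_itv /= => /andP[xq qe] /andP[ep px].
exists p, q; split; first lra.
apply: meagerS mAU => y [+ nAy]; rewrite /= in_itv /= => /andP[py yq].
by right; split => //; apply: eU; rewrite /= in_itv /=; apply/andP; split; lra.
Qed.

(* Two members sharing a rational interval would make it meager, contradicting Baire. *)
Lemma nonmeager_disjoint_countable (I : Type) (A : I -> set R) :
  (forall i, baire_property (A i)) -> (forall i j x, A i x -> A j x -> i = j) ->
  countable [set i | ~ meager (A i)].
Proof.
move=> bpA disjA.
have /choice[c cP] : forall i, exists c : rat * rat, ~ meager (A i) ->
    ratr c.1 < ratr c.2 :> R /\ meager (`]ratr c.1, ratr c.2[%classic `\` A i).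
  move=> i; have [mAi|/(baire_property_not_meager (bpA i))[p [q pq]]] :=
    pselect (meager (A i)); first by exists (0, 0).
  by exists (p, q).
apply/countable_injP; exists (fun i => pickle (c i)).
move=> i j; rewrite !inE /= => /cP[ci mi] /cP[_ mj] /(pcan_inj pickleK) cij.
rewrite cij in ci mi.
set J := `]ratr (c j).1, ratr (c j).2[%classic : set R.
have [//|ij] := pselect (i = j); exfalso.
have J0 : J !=set0.
  exists ((ratr (c j).1 + ratr (c j).2) / 2).
  by rewrite /J /= in_itv /=; apply/andP; split; lra.
apply: (@open_nonempty_not_meager R R^o J (itv_open _ _) J0).
apply: meagerS (meagerU mi mj) => y Jy.
have [Aiy|] := pselect (A i y); last by left.
by have [/(disjA _ _ _ Aiy)|] := pselect (A j y); [|right].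
Qed.

End real_line.

Section disjoint_measure.
Context d (T : measurableType d) (R : realType) (mu : {measure set T -> \bar R}).
Variables (I : pointedType) (A : I -> set T).
Hypotheses (mA : forall i, measurable (A i))
  (disjA : forall i j x, A i x -> A j x -> i = j).

(* [M] members of measure [> eps] inside [B] force [M * eps <= mu B]. *)
Lemma disjoint_measure_gt_finite (B : set T) (eps : R) :
  measurable B -> (mu B < +oo)%E -> 0 < eps ->
  finite_set [set i | (eps%:E < mu (A i `&` B))%E].
Proof.
move=> mB muBoo eps0; apply: contrapT => /infiniteP/pcard_leP[g].
have gI : injective g by move=> m n; apply: (@inj _ _ _ g); rewrite inE.
have gA m : (eps%:E < mu (A (g m) `&` B))%E by have := @funS _ _ _ _ g m Logic.I.
pose F m := A (g m) `&` B.
have mF m : measurable (F m) by exact: measurableI.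
have tF : trivIset setT F.
  apply/trivIsetP => m n _ _ mn; apply/seteqP; split => // x [[Ax _] [Ay _]].
  by move: mn; rewrite (gI _ _ (disjA Ax Ay)) eqxx.
have sum_le M : ((M%:R * eps)%:E <= mu B)%E.
  apply: (@le_trans _ _ (mu (\big[setU/set0]_(m < M) F m))); last first.
    apply: le_measure; rewrite ?inE //; first exact: bigsetU_measurable.
    by move=> x; rewrite -bigcup_mkord => -[m _ []].
  rewrite measure_bigsetU //; apply: (@le_trans _ _ (\sum_(m < M) eps%:E)%E).
    by rewrite sumEFin sumr_const card_ord mulr_natl.
  by apply: lee_sum => m _; exact/ltW/gA.
have muBr : mu B = (fine (mu B))%:E by rewrite fineK // ge0_fin_numE.
set r := fine (mu B) in muBr.
have := sum_le (Num.bound (r / eps)); rewrite muBr lee_fin -ler_pdivlMr //.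
have r0 : 0 <= r by rewrite fine_ge0 // measure_ge0.
by apply/negP; rewrite -ltNge archi_boundP // divr_ge0 // ltW.
Qed.

Lemma disjoint_measure_neq0_countable : sigma_finite setT mu ->
  countable [set i | mu (A i) != 0%E].
Proof.
move=> [F TF /all_and2[mF Foo]].
apply: (@sub_countable _ _ _ (\bigcup_(p in [set: nat * nat])
    [set i | ((p.2.+1%:R)^-1%:E < mu (A i `&` F p.1))%E])); last first.
  apply: bigcup_countable; first exact: countableP.
  move=> [n k] _; apply/finite_set_countable/disjoint_measure_gt_finite => //.
apply: subset_card_le => i /= /eqP muAi0.
have [n muAF0] : exists n, mu (A i `&` F n) != 0%E.
  apply: contrapT => /forallNP muAF0; apply/muAi0/(negligibleP mu (mA i)).
  apply: (@negligibleS _ _ _ mu (\bigcup_n (A i `&` F n))).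
    move=> x Ax; have [n _ Fx] : (\bigcup_n F n) x by rewrite -TF.
    by exists n.
  apply: negligible_bigcup => n; apply/(negligibleP _ (measurableI _ _ (mA i) (mF n))).
  by apply/eqP/negPn/negP; exact: muAF0.
have AFoo : (mu (A i `&` F n) < +oo)%E.
  by apply: le_lt_trans (Foo n); apply: le_measure; rewrite ?inE //; exact: measurableI.
have AFr : mu (A i `&` F n) = (fine (mu (A i `&` F n)))%:E.
  by rewrite fineK // ge0_fin_numE.
have r0 : 0 < fine (mu (A i `&` F n)).
  by rewrite -lte_fin -AFr lt0e muAF0 measure_ge0.
have [k] := ltr_add_invr r0; rewrite add0r => kr.
by exists (n, k) => //=; rewrite AFr lte_fin.
Qed.

End disjoint_measure.

Lemma countableU T (A B : set T) : countable A -> countable B -> countable (A `|` B).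
Proof.
move=> cA cB; have -> : A `|` B = \bigcup_(b in [set: bool]) if b then A else B.
  by apply/seteqP; split => [x [Ax|Bx]|x [[] _]]; [exists true|exists false|left|right].
by apply: bigcup_countable => [|[]]; first exact: countableP.
Qed.

Lemma bool_seq_uncountable : ~ countable [set: nat -> bool].
Proof.
move=> /countable_injP[f /(_ _ _ (in_setT _) (in_setT _)) fI].
have /choice[g gf] : forall n, exists b : nat -> bool, (exists a, f a = n) -> f b = n.
  move=> n; have [[a fa]|nfa] := pselect (exists a, f a = n); first by exists a => _.
  by exists (fun=> false) => /nfa.
pose diag n := ~~ g n n.
have /(congr1 (fun b => b (f diag))) : g (f diag) = diag by apply/fI/gf; exists diag.
by rewrite /diag; case: (g (f diag) (f diag)).
Qed.

Theorem mainTheorem16 (R : realType) (f : R -> R) :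
  measurable_fun [set: R] f ->
  exists P : set R,
    [/\ P !=set0, perfect_set P,
        meager (f @^-1` P) &
        (@lebesgue_measure R).-negligible (f @^-1` P)].
Proof.
move=> mf; pose A (t : cantor_space) := f @^-1` @cantor_copy R t.
have mA t : measurable (A t).
  have cA := measurable_realfun.closed_measurable (@cantor_copy_closed R t).
  have := mf measurableT _ cA.
  by rewrite setTI.
have disjA t t' x : A t x -> A t' x -> t = t' by exact: cantor_copy_disjoint.
pose bad := [set t | ~ meager (A t)] `|` [set t | @lebesgue_measure R (A t) != 0%E].
have bad_countable : countable bad.
  apply: countableU.
    exact: nonmeager_disjoint_countable (fun t => measurable_baire_property (mA t)) disjA.
  apply: (disjoint_measure_neq0_countable (mu := @lebesgue_measure R) mA disjA).
  exact: sigma_finiteT.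
have [t nbad] : exists t, ~ bad t.
  apply: contrapT => /forallNP allbad; apply: bool_seq_uncountable.
  suff -> : [set: nat -> bool] = bad by [].
  by apply/seteqP; split => // t _; apply: contrapT; exact: allbad.
exists (@cantor_copy R t); split.
- exact: cantor_copy_neq0.
- exact: cantor_copy_perfect.
- by apply: contrapT => nm; apply: nbad; left.
- apply/(negligibleP (@lebesgue_measure R) (mA t)).
  by apply/eqP/negPn/negP => ?; apply: nbad; right.
Qed.
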